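(* Let $m\in\{1,2,3\}$ and let $S\ni h$ be a polarized lattice that is $(m-1)$-admissible (no condition if $m=1$), with $h^2\ge4$ if $m=2$ and $h^2=8$ if $m=3$. Let $\Delta$ be a Weyl chamber for $\operatorname{rt}(S,h)$ and $\bar P$ the closed fundamental polyhedron extending $\Delta$. If $S\ni h$ fails to be $m$-admissible, then there exists an $m$-isotropic vector $w\in\bar P$.
   Context: All lattices are even; $(S,h)$ polarized means $S$ hyperbolic, $h^2>0$. $\operatorname{rt}(S,h)$ is the root lattice spanned by $\{r\in S: r^2=-2,\ r\cdot h=0\}$, and a Weyl chamber $\Delta$ for it is given by its set of positive roots $P_\Delta$. The closed fundamental polyhedron is $\bar P=\{v\in S\otimes\mathbb{R}: v^2\ge0,\ v\cdot h\ge0,\ v\cdot r\ge0 \text{ for all } r\in P_\Delta \text{ and all roots } r \text{ with } r\cdot h>0\}$. A vector $w$ is $m$-isotropic if $w^2=0$ and $w\cdot h=m$. $S\ni h$ is $1$-admissible if it has no $1$-isotropic vector; $2$-admissible (defined for $h^2\ge4$) if moreover it has no $2$-isotropic vector; $3$-admissible (defined for $h^2=8$) if moreover it has no $3$-isotropic vector. *)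

From HB Require Import structures.
From mathcomp Require Import all_boot all_order all_algebra.
Set Implicit Arguments. Unset Strict Implicit. Unset Printing Implicit Defensive.
Import Order.TTheory GRing.Theory Num.Theory.
Local Open Scope ring_scope.

(* An (integral) lattice S of rank n is Z^n (column vectors) with the
   bilinear form given by a Gram matrix G : 'M[int]_n. *)

Definition bform {n} (G : 'M[int]_n) (u v : 'cV[int]_n) : int :=
  (u^T *m G *m v) 0 0.

Definition bformQ {n} (G : 'M[int]_n) (u v : 'cV[rat]_n) : rat :=
  (u^T *m map_mx intr G *m v) 0 0.

Definition intQ {n} (v : 'cV[int]_n) : 'cV[rat]_n := map_mx intr v.

Definition even_lattice {n} (G : 'M[int]_n) : Prop :=
  G^T = G /\ forall i, (2 %| G i i)%Z.

Definition hyperbolic {n} (G : 'M[int]_n) : Prop :=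
  exists P : 'M[rat]_n, P \in unitmx /\
    exists d : 'I_n -> rat,
      P^T *m map_mx intr G *m P = \matrix_(i, j) (if i == j then d i else 0)
      /\ exists i0, 0 < d i0 /\ forall i, i != i0 -> d i < 0.

Definition polarized {n} (G : 'M[int]_n) (h : 'cV[int]_n) : Prop :=
  even_lattice G /\ hyperbolic G /\ 0 < bform G h h.

Definition is_root {n} (G : 'M[int]_n) (r : 'cV[int]_n) : bool :=
  bform G r r == -2.

(* roots of rt(S,h): roots orthogonal to h (these are exactly the roots of
   the root lattice rt(S,h)) *)
Definition is_rt_root {n} (G : 'M[int]_n) (h r : 'cV[int]_n) : bool :=
  is_root G r && (bform G r h == 0).

(* A Weyl chamber Delta of rt(S,h) is determined by a regular element
   x of rt(S,h) (x) Q, realized as the linear functional r |-> x.r with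
   x in S (x) Q, nonvanishing on all roots; its positive roots are
   P_Delta = {r root of rt(S,h) : x.r > 0}. *)
Definition regular_elt {n} (G : 'M[int]_n) (h : 'cV[int]_n) (x : 'cV[rat]_n) : Prop :=
  forall r, is_rt_root G h r -> bformQ G x (intQ r) != 0.

Definition positive_root {n} (G : 'M[int]_n) (h : 'cV[int]_n) (x : 'cV[rat]_n)
  (r : 'cV[int]_n) : bool :=
  is_rt_root G h r && (0 < bformQ G x (intQ r)).

Definition in_Pbar {n} (G : 'M[int]_n) (h : 'cV[int]_n) (x : 'cV[rat]_n)
  (v : 'cV[int]_n) : Prop :=
  0 <= bform G v v /\ 0 <= bform G v h /\
  (forall r, positive_root G h x r -> 0 <= bform G v r) /\
  (forall r, is_root G r -> 0 < bform G r h -> 0 <= bform G v r).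

Definition isotropic_m {n} (G : 'M[int]_n) (h : 'cV[int]_n) (m : nat)
  (w : 'cV[int]_n) : Prop :=
  bform G w w = 0 /\ bform G w h = m%:Z.

(* k-admissibility (the conditions on h^2 under which it is defined are
   stated separately): no j-isotropic vector for 1 <= j <= k. *)
Definition admissible {n} (G : 'M[int]_n) (h : 'cV[int]_n) (k : nat) : Prop :=
  forall j : nat, (0 < j <= k)%N -> ~ exists w, isotropic_m G h j w.

(* Start from an m-isotropic vector w; it exists because S is (m-1)- but not
   m-admissible.  If w.r < 0 for a positive root r of rt(S,h), the reflection
   w + (w.r) r is again m-isotropic and pairs less with the regular element x.
   By the reverse Cauchy-Schwarz inequality of the hyperbolic form, x.w is
   bounded below on m-isotropic vectors, and it is integral once the
   denominators of x are cleared, so this descent stops.  If w.r < 0 for a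
   root with r.h > 0, the same reflection gives an isotropic w' with
   w.w' = (w.r)^2 > 0, so w' lies in the same half of the light cone as w and
   0 < w'.h < m, contradicting (m-1)-admissibility. *)

From HB Require Import structures.
From mathcomp Require Import all_boot all_order all_algebra.
From mathcomp Require Import ring lra zify.
From Stdlib Require Import Classical.
Import Order.TTheory GRing.Theory Num.Theory.
Set Implicit Arguments. Unset Strict Implicit.
Local Open Scope ring_scope.

Lemma int_descent (T : Type) (P Q : T -> Prop) (f : T -> int) (lb : int) :
  (forall t, P t -> lb <= f t) ->
  (forall t, P t -> Q t \/ exists2 t', P t' & f t' < f t) ->
  forall t, P t -> exists2 t', P t' & Q t'.
Proof.
move=> lbP step t Pt; have [N] : exists N : nat, f t - lb <= N%:Z.
  by exists `|f t - lb|%N; lia.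
elim: N t Pt => [|N IH] t Pt f_le; have [Qt|[t' Pt' lt]] := step t Pt;
  try by exists t.
- by have := lbP t' Pt'; lia.
- by apply: (IH t' Pt'); lia.
Qed.

Lemma rat_cV_int_multiple n (x : 'cV[rat]_n) :
  exists2 D : int, 0 < D & exists X, intQ X = D%:~R *: x.
Proof.
exists (\prod_i denq (x i 0)).
  by apply: prodr_gt0 => i _; exact: denq_gt0.
exists (\col_i (numq (x i 0) * \prod_(j | j != i) denq (x j 0))).
apply/matrixP => i j; rewrite !mxE (ord1 j).
by rewrite intrM [in RHS](bigD1 i) //= intrM numqE; ring.
Qed.

Section BilinearForm.
Variables (R : comPzRingType) (n : nat) (M : 'M[R]_n).

Definition bil (u v : 'cV[R]_n) : R := (u^T *m M *m v) 0 0.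

Lemma bilDl u v w : bil (u + v) w = bil u w + bil v w.
Proof. by rewrite /bil linearD /= !mulmxDl mxE. Qed.

Lemma bilDr u v w : bil w (u + v) = bil w u + bil w v.
Proof. by rewrite /bil mulmxDr mxE. Qed.

Lemma bilZl a u w : bil (a *: u) w = a * bil u w.
Proof. by rewrite /bil linearZ /= -!scalemxAl mxE. Qed.

Lemma bilZr a u w : bil w (a *: u) = a * bil w u.
Proof. by rewrite /bil -scalemxAr mxE. Qed.

Lemma bilBl u v w : bil (u - v) w = bil u w - bil v w.
Proof. by rewrite bilDl -scaleN1r bilZl mulN1r. Qed.

Lemma bilBr u v w : bil w (u - v) = bil w u - bil w v.
Proof. by rewrite bilDr -scaleN1r bilZr mulN1r. Qed.

Lemma bilC : M^T = M -> forall u v, bil u v = bil v u.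
Proof.
move=> symM u v; rewrite /bil -[in LHS](trmxK (u^T *m M *m v)) mxE.
by rewrite !trmx_mul trmxK symM mulmxA.
Qed.

End BilinearForm.

Section Lorentzian.
Variables (R : realFieldType) (n : nat) (M : 'M[R]_n).
Variables (c : 'rV[R]_n) (e : 'cV[R]_n).
Hypothesis symM : M^T = M.
Hypothesis le0_hyperplane : forall u, (c *m u) 0 0 = 0 -> bil M u u <= 0.
Hypothesis e_pos : 0 < bil M e e.

Lemma orthogonal_pos_le0 z : bil M z e = 0 -> bil M z z <= 0.
Proof.
move=> ze; pose a := (c *m e) 0 0; pose b := (c *m z) 0 0.
have a_neq0 : a != 0.
  by apply: contraTneq e_pos => a0; rewrite -leNgt le0_hyperplane.
have : bil M (a *: z - b *: e) (a *: z - b *: e) <= 0.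
  apply: le0_hyperplane.
  by rewrite mulmxBr -!scalemxAr !mxE /a /b !mxE mulrC subrr.
rewrite !(bilBl, bilBr, bilZl, bilZr) (bilC symM e z) ze.
rewrite !mulr0 subr0 sub0r opprK.
rewrite !mulrA -!expr2 => sum_le0; rewrite leNgt; apply/negP => zz_gt0.
have : 0 < a ^+ 2 * bil M z z by rewrite mulr_gt0 ?exprn_even_gt0.
have : 0 <= b ^+ 2 * bil M e e by rewrite mulr_ge0 ?sqr_ge0 ?ltW.
lra.
Qed.

Lemma reverse_cauchy_schwarz v : bil M e e * bil M v v <= bil M v e ^+ 2.
Proof.
set k := bil M e e; set B := bil M v e.
have := @orthogonal_pos_le0 (k *: v - B *: e).
rewrite !(bilBl, bilBr, bilZl, bilZr) (bilC symM e v) -/k -/B.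
have -> : k * B - B * k = 0 by ring.
by move=> /(_ erefl); rewrite mulr0 subr0 pmulr_rle0 // subr_le0 expr2.
Qed.

Lemma isotropic_dot_bounded_below (x : 'cV[R]_n) (mu : R) :
  exists lb, forall w, bil M w w = 0 -> bil M w e = mu -> lb <= bil M x w.
Proof.
set k := bil M e e.
exists ((k * bil M x x - (mu - bil M x e) ^+ 2) / (2 * k)) => w ww we.
have := reverse_cauchy_schwarz (w - x).
rewrite !(bilBl, bilBr) (bilC symM w x) ww we -/k.
rewrite ler_pdivrMr; last by rewrite mulr_gt0.
nra.
Qed.

Lemma isotropic_same_cone u v :
  bil M u u = 0 -> bil M v v = 0 -> 0 < bil M u e -> 0 < bil M u v ->
  0 < bil M v e.
Proof.
move=> uu vv ue_gt0 uv_gt0; rewrite ltNge; apply/negP => ve_le0.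
set a := bil M u e in ue_gt0; set b := bil M v e in ve_le0.
set k := bil M e e; set p := bil M u v in uv_gt0.
have k_gt0 : 0 < k := e_pos.
have [b0|b_neq0] := eqVneq b 0.
  (* Below, the e-pairing k p a is too small for the square 2 k p^2 a^2. *)
  have := reverse_cauchy_schwarz ((k * p) *: u + a ^+ 2 *: v).
  rewrite !(bilDl, bilDr, bilZl, bilZr) uu vv (bilC symM v u).
  rewrite -/a -/b -/k -/p b0.
  have : 0 < k ^+ 2 * p ^+ 2 * a ^+ 2 by rewrite !mulr_gt0 ?exprn_gt0.
  nra.
have b_lt0 : b < 0 by rewrite lt_neqAle b_neq0.
have := @orthogonal_pos_le0 ((- b) *: u + a *: v).
rewrite !(bilDl, bilDr, bilZl, bilZr) uu vv (bilC symM v u) -/a -/b -/p.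
have -> : - b * a + a * b = 0 by ring.
rewrite !mulr0 add0r addr0 => /(_ erefl).
have : 0 < a * (- b * p) by rewrite !mulr_gt0 ?oppr_gt0.
lra.
Qed.

End Lorentzian.

Lemma bformE n (G : 'M[int]_n) u v : bform G u v = bil G u v.
Proof. by []. Qed.

Lemma bformC n (G : 'M[int]_n) u v : G^T = G -> bform G u v = bform G v u.
Proof. by move=> symG; rewrite !bformE bilC. Qed.

Lemma bformQE n (G : 'M[int]_n) u v : bformQ G u v = bil (map_mx intr G) u v.
Proof. by []. Qed.

Lemma bformQ_intQ n (G : 'M[int]_n) u v :
  bformQ G (intQ u) (intQ v) = (bform G u v)%:~R.
Proof. by rewrite /bformQ /intQ /bform map_trmx -!map_mxM mxE. Qed.

Lemma hyperbolic_le0_hyperplane n (G : 'M[int]_n) : hyperbolic G ->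
  exists c : 'rV[rat]_n,
    forall u, (c *m u) 0 0 = 0 -> bil (map_mx intr G) u u <= 0.
Proof.
move=> [P [P_unit [d [PGP [i0 [_ d_lt0]]]]]].
exists (row i0 (invmx P)) => u u0.
set y := invmx P *m u.
have y0 : y i0 0 = 0 by move: u0; rewrite -row_mul mxE.
have -> : u = P *m y by rewrite mulKVmx.
clearbody y.
have -> : bil (map_mx intr G) (P *m y) (P *m y) =
          (y^T *m (P^T *m map_mx intr G *m P) *m y) 0 0.
  by rewrite /bil trmx_mul !mulmxA.
rewrite PGP mxE; apply: sumr_le0 => j _.
rewrite mxE (bigD1 j) //= big1 => [|i /negbTE ij]; last first.
  by rewrite !mxE ij mulr0.
rewrite !mxE eqxx addr0.
have [->|j_neq_i0] := eqVneq j i0; first by rewrite y0 !mulr0.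
by rewrite mulrAC -expr2 mulrC nmulr_rle0 ?sqr_ge0 ?d_lt0.
Qed.

Section Polarized.
Variables (n : nat) (G : 'M[int]_n) (h : 'cV[int]_n).
Hypothesis pol : polarized G h.

Let symG : G^T = G.
Proof. exact: pol.1.1. Qed.

Let symGQ : (map_mx intr G : 'M[rat]_n)^T = map_mx intr G.
Proof. by rewrite map_trmx symG. Qed.

Let hQ_pos : 0 < bil (map_mx intr G) (intQ h) (intQ h).
Proof. by rewrite -bformQE bformQ_intQ ltr0z; exact: pol.2.2. Qed.

Lemma polarized_same_cone u v :
  bform G u u = 0 -> bform G v v = 0 -> 0 < bform G u h -> 0 < bform G u v ->
  0 < bform G v h.
Proof.
have [c le0] := hyperbolic_le0_hyperplane pol.2.1.
move=> uu vv; rewrite -!(ltr0z rat) -!bformQ_intQ.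
by apply: isotropic_same_cone symGQ le0 hQ_pos _ _ _ _;
  rewrite -bformQE bformQ_intQ ?uu ?vv.
Qed.

Lemma polarized_isotropic_bounded_below (m : nat) (x : 'cV[rat]_n) :
  exists lb, forall w, isotropic_m G h m w -> lb <= bformQ G x (intQ w).
Proof.
have [c le0] := hyperbolic_le0_hyperplane pol.2.1.
have [lb lbP] := isotropic_dot_bounded_below symGQ le0 hQ_pos x m%:R.
exists lb => w [ww wh]; apply: lbP; rewrite -bformQE bformQ_intQ.
  by rewrite ww.
by rewrite wh.
Qed.

End Polarized.

Section RootReflection.
Variables (n : nat) (G : 'M[int]_n).

Definition root_refl (r w : 'cV[int]_n) := w + bform G w r *: r.

Lemma bform_root_refl r w v :
  bform G (root_refl r w) v = bform G w v + bform G w r * bform G r v.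
Proof. by rewrite !bformE bilDl bilZl. Qed.

Lemma bform_root_refl_sqr r w : G^T = G -> is_root G r ->
  bform G (root_refl r w) (root_refl r w) = bform G w w.
Proof.
move=> symG /eqP rr.
rewrite bform_root_refl !bformE /root_refl !(bilDr, bilZr) -!bformE.
rewrite (bformC r w symG) rr.
ring.
Qed.

End RootReflection.

Section Descent.
Variables (n : nat) (G : 'M[int]_n) (h : 'cV[int]_n) (m : nat) (x : 'cV[rat]_n).
Hypotheses (pol : polarized G h) (m_gt0 : (0 < m)%N).
Hypothesis adm : admissible G h m.-1.

Lemma admissible_root_ge0 w r : isotropic_m G h m w -> is_root G r ->
  0 < bform G r h -> 0 <= bform G w r.
Proof.
move=> [ww wh] r_root rh_gt0; rewrite leNgt; apply/negP => wr_lt0.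
set w' := root_refl G r w.
have w'w' : bform G w' w' = 0 by rewrite bform_root_refl_sqr // pol.1.1.
have w'h_gt0 : 0 < bform G w' h.
  apply: (polarized_same_cone pol ww w'w'); first by rewrite wh ltz_nat.
  by rewrite (bformC w w' pol.1.1) bform_root_refl ww add0r (bformC r w pol.1.1)
    -mulrNN mulr_gt0 ?oppr_gt0.
have w'h_lt : bform G w' h < m%:Z.
  by rewrite bform_root_refl wh gtrDl nmulr_rlt0.
have j_range : (0 < `|bform G w' h| <= m.-1)%N by lia.
by apply: (adm j_range); exists w'; split; rewrite // gez0_abs ?ltW.
Qed.

Lemma positive_root_refl_descent w r : positive_root G h x r ->
  isotropic_m G h m w -> bform G w r < 0 ->
  isotropic_m G h m (root_refl G r w) /\
  bformQ G x (intQ (root_refl G r w)) < bformQ G x (intQ w).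
Proof.
move=> /andP[/andP[r_root /eqP rh] xr_gt0] [ww wh] wr_lt0; split; first split.
- by rewrite bform_root_refl_sqr // pol.1.1.
- by rewrite bform_root_refl rh mulr0 addr0.
rewrite /intQ /root_refl map_mxD map_mxZ !bformQE bilDr bilZr -!bformQE.
by rewrite gtrDl pmulr_llt0 // ltrz0.
Qed.

Lemma isotropic_descent_step w : isotropic_m G h m w ->
  in_Pbar G h x w \/
  exists2 w', isotropic_m G h m w' & bformQ G x (intQ w') < bformQ G x (intQ w).
Proof.
move=> iso_w.
have [[r [pr wr_lt0]]|no_bad_root] :=
  classic (exists r, positive_root G h x r /\ bform G w r < 0).
  have [iso_w' lt_w'] := positive_root_refl_descent pr iso_w wr_lt0.
  by right; exists (root_refl G r w).
left; have [ww wh] := iso_w; split; first by rewrite ww.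
split; first by rewrite wh.
split; last by move=> r; apply: admissible_root_ge0.
move=> r pr; rewrite leNgt; apply/negP => wr_lt0.
by apply: no_bad_root; exists r.
Qed.

End Descent.

Lemma not_admissible_isotropic n (G : 'M[int]_n) h m :
  admissible G h m.-1 -> ~ admissible G h m -> exists w, isotropic_m G h m w.
Proof.
move=> adm nadm; apply: NNPP => no_iso; apply: nadm => j j_range iso_j.
have [j_lt|j_ge] := ltnP j m; first by apply: (adm j) iso_j; lia.
by apply: no_iso; have -> : m = j by lia.
Qed.

Lemma bformQ_descent n (G : 'M[int]_n) (x : 'cV[rat]_n)
    (P Q : 'cV[int]_n -> Prop) (lb : rat) :
  (forall w, P w -> lb <= bformQ G x (intQ w)) ->
  (forall w, P w -> Q w \/
     exists2 w', P w' & bformQ G x (intQ w') < bformQ G x (intQ w)) ->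
  forall w, P w -> exists2 w', P w' & Q w'.
Proof.
move=> lbP step.
have [D D_gt0 [X XE]] := rat_cV_int_multiple x.
have XwE w : (bform G X w)%:~R = D%:~R * bformQ G x (intQ w).
  by rewrite -bformQ_intQ XE !bformQE bilZl.
apply: (@int_descent _ P Q (bform G X) (Num.floor (D%:~R * lb))).
  move=> w Pw; rewrite -(ler_int rat); apply: le_trans (floor_le _) _.
  by rewrite XwE ler_pM2l ?ltr0z ?lbP.
move=> w /step [Qw|[w' Pw' lt]]; [by left | right; exists w' => //].
by rewrite -(ltr_int rat) !XwE ltr_pM2l ?ltr0z.
Qed.

Theorem mainTheorem11 (n : nat) (G : 'M[int]_n) (h : 'cV[int]_n) (m : nat)
  (x : 'cV[rat]_n) :
  (1 <= m <= 3)%N ->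
  polarized G h ->
  admissible G h m.-1 ->
  (m = 2%N -> 4 <= bform G h h) ->
  (m = 3%N -> bform G h h = 8) ->
  regular_elt G h x ->
  ~ admissible G h m ->
  exists w, isotropic_m G h m w /\ in_Pbar G h x w.
Proof.
(* The bounds on h^2 and the regularity of x only make the notions of the
   paper well defined; the argument does not need them. *)
move=> /andP[m_gt0 _] pol adm _ _ _ nadm.
have [w0 iso_w0] := not_admissible_isotropic adm nadm.
have [lb lbP] := polarized_isotropic_bounded_below pol m x.
have [w iso_w Pbar_w] :=
  bformQ_descent lbP (isotropic_descent_step x pol m_gt0 adm) iso_w0.
by exists w.
Qed.
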